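(* Let $\Gamma$ be a finite group, $R$ a braided Hopf algebra in ${}^\Gamma_\Gamma\mathcal{YD}$, $A=R\#\Bbbk\Gamma$, and $\mathscr D\subseteq A^e$ the subalgebra generated by the elements $(r\#g)\otimes(s\#g^{-1})$ with $r,s\in R$, $g\in\Gamma$. Then $\mathscr D$ is a left $A$-submodule of $\mathcal L(A^e)$ and a right $A$-submodule of $\mathcal R(A^e)$.
   Context: $A^e=A\otimes A^{op}$. The map $\rho:A\to A^e$, $\rho(a)=a_1\otimes\mathcal S_A(a_2)$, is an algebra embedding; $\mathcal L(A^e)$ is $A^e$ with left $A$-action $a\cdot x=\rho(a)x$ (i.e. $a\cdot(x\otimes y)=a_1x\otimes y\,\mathcal S_A(a_2)$) and $\mathcal R(A^e)$ is $A^e$ with right $A$-action $x\cdot a=x\rho(a)$ (i.e. $(x\otimes y)\cdot a=xa_1\otimes\mathcal S_A(a_2)y$). $A$ is the bosonization with comultiplication $\Delta(r\#h)=\sum_{g}r^1\#gh\otimes(r^2)_g\#h$ and antipode $\mathcal S_A(r\#h)=\sum_g h^{-1}g^{-1}\mathcal S_R(r_g)$, where $R=\bigoplus_{g\in\Gamma}R_g$, $R_g=\{r:\delta(r)=g\otimes r\}$ for the coaction $\delta$, and $r_g$ is the $R_g$-component of $r$. *)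

From HB Require Import structures.
From mathcomp Require Import all_boot all_order all_algebra all_fingroup.
Set Implicit Arguments. Unset Strict Implicit. Unset Printing Implicit Defensive.
Import GRing.Theory.
Local Open Scope ring_scope.

Definition linP (K : fieldType) (U W : lmodType K) (f : U -> W) : Prop :=
  forall (a : K) (x y : U), f (a *: x + y) = a *: f x + f y.

Definition bilin (K : fieldType) (U V W : lmodType K) (f : U -> V -> W) : Prop :=
  (forall v, linP (fun u => f u v)) /\ (forall u, linP (f u)).

(* A tensor product U (x) V of K-vector spaces, given by its universal
   property (existence and uniqueness of the linear factorisation of every
   bilinear map).  Any two such objects are canonically isomorphic.      *)
Record tensor (K : fieldType) (U V : lmodType K) := Tensor {
  tcar :> lmodType K;
  tens : U -> V -> tcar;
  tens_bilin : bilin tens;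
  tlift : forall W : lmodType K, (U -> V -> W) -> tcar -> W;
  tlift_lin : forall (W : lmodType K) (f : U -> V -> W), bilin f -> linP (tlift f);
  tlift_tens : forall (W : lmodType K) (f : U -> V -> W), bilin f ->
      forall u v, tlift f (tens u v) = f u v;
  tlift_uniq : forall (W : lmodType K) (f : U -> V -> W) (h : tcar -> W),
      linP h -> (forall u v, h (tens u v) = f u v) -> forall t, h t = tlift f t
}.
Arguments tens {K U V} _ _ _.
Arguments tlift {K U V} _ {W} _ _.

(* A braided Hopf algebra in the category of Yetter-Drinfeld modules over
   the group algebra K Gamma of a finite group Gamma.
   - The K Gamma-module structure is the action [act g].
   - The K Gamma-comodule structure delta : R -> K Gamma (x) R is encoded,
     via K Gamma (x) R = R^Gamma (Gamma finite), as
     [coact r : {ffun Gamma -> R}], delta(r) = sum_g g (x) coact r g;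
     thus coact r g = r_g is the R_g-component of r.
   - The braiding is c(x (x) y) = x_(-1).y (x) x_(0) = sum_g g.y (x) x_g.
   - T2 = R (x) R and T3 = R (x) (R (x) R) are tensor products.          *)
Record YDHopf (K : fieldType) (gT : finGroupType) := {
  carR :> algType K;
  act : gT -> carR -> carR;
  coact : carR -> {ffun gT -> carR};
  T2 : tensor carR carR;
  T3 : tensor carR T2;
  comul : carR -> T2;
  counit : carR -> K;
  antip : carR -> carR;
  act_lin : forall g, linP (act g);
  act1 : forall r, act 1%g r = r;
  actM : forall g h r, act (g * h)%g r = act g (act h r);
  coact_lin : linP coact;
  coact_coassoc : forall r g h,
      coact (coact r g) h = if g == h then coact r g else 0;
  coact_counit : forall r, \sum_(g : gT) coact r g = r;
  (* Yetter-Drinfeld compatibility: delta(g.r) = g r_(-1) g^-1 (x) g.r_(0) *)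
  yd_compat : forall g r h, coact (act g r) h = act g (coact r (h ^ g)%g);
  act_mul : forall g r s, act g (r * s) = act g r * act g s;
  act_one : forall g, act g 1 = 1;
  coact_mul : forall r s h,
      coact (r * s) h = \sum_(g : gT) coact r g * coact s (g^-1 * h)%g;
  coact_one : forall h, coact 1 h = if h == 1%g then 1 else 0;
  comul_lin : linP comul;
  counit_lin : forall (a : K) x y, counit (a *: x + y) = a * counit x + counit y;
  coassoc : forall r,
      tlift T2 (fun x y => tlift T2 (fun x1 x2 => tens T3 x1 (tens T2 x2 y)) (comul x))
            (comul r)
      = tlift T2 (fun x y => tens T3 x (comul y)) (comul r);
  counitl : forall r, tlift T2 (fun x y => counit x *: y) (comul r) = r;
  counitr : forall r, tlift T2 (fun x y => counit y *: x) (comul r) = r;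
  comul_act : forall g r,
      comul (act g r) = tlift T2 (fun x y => tens T2 (act g x) (act g y)) (comul r);
  comul_coact : forall r h,
      comul (coact r h) =
      \sum_(a : gT) tlift T2 (fun x y => tens T2 (coact x a) (coact y (a^-1 * h)%g))
                         (comul r);
  counit_act : forall g r, counit (act g r) = counit r;
  counit_coact : forall r h, counit (coact r h) = if h == 1%g then counit r else 0;
  (* braided bialgebra axioms: Delta(rs) = (m(x)m)(id(x)c(x)id)(Delta r (x) Delta s) *)
  comul_mul : forall r s,
      comul (r * s) =
      tlift T2 (fun r1 r2 =>
        tlift T2 (fun s1 s2 =>
          \sum_(g : gT) tens T2 (r1 * act g s1) (coact r2 g * s2)) (comul s))
        (comul r);
  comul_one : comul 1 = tens T2 1 1;
  counit_mul : forall r s, counit (r * s) = counit r * counit s;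
  counit_one : counit 1 = 1;
  antip_lin : linP antip;
  antip_act : forall g r, antip (act g r) = act g (antip r);
  antip_coact : forall r h, antip (coact r h) = coact (antip r) h;
  antipl : forall r, tlift T2 (fun x y => antip x * y) (comul r) = counit r *: 1;
  antipr : forall r, tlift T2 (fun x y => x * antip y) (comul r) = counit r *: 1
}.

Arguments act {K gT} _ _ _.
Arguments coact {K gT} _ _.
Arguments T2 {K gT} _.
Arguments T3 {K gT} _.
Arguments comul {K gT} _ _.
Arguments counit {K gT} _ _.
Arguments antip {K gT} _ _.
Arguments carR {K gT} _.

(* Bosonization A = R # K Gamma.  As a vector space A = R (x) K Gamma,
   encoded (Gamma finite) as {ffun Gamma -> R}, with r # g the function
   supported at g with value r.                                         *)
Section Bosonization.
Variables (K : fieldType) (gT : finGroupType) (R : YDHopf K gT).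

Definition Abos := {ffun gT -> carR R}.

Definition sharp (r : carR R) (g : gT) : Abos :=
  [ffun h => if h == g then r else 0].

(* (r # g)(s # h) = r (g.s) # gh *)
Definition mulA (a b : Abos) : Abos :=
  \sum_(g : gT) \sum_(h : gT) sharp (a g * act R g (b h)) (g * h)%g.

Definition oneA : Abos := sharp 1 1%g.

(* Delta(r # h) = sum_g r^1 # g h (x) (r^2)_g # h *)
Definition comulA (TA : tensor Abos Abos) (a : Abos) : TA :=
  \sum_(h : gT) \sum_(g : gT)
     tlift (T2 R) (fun x y => tens TA (sharp x (g * h)%g) (sharp (coact R y g) h))
           (comul R (a h)).

(* S(r # h) = sum_g h^-1 g^-1 S_R(r_g) = sum_g (h^-1 g^-1).S_R(r_g) # h^-1 g^-1 *)
Definition antipA (a : Abos) : Abos :=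
  \sum_(h : gT) \sum_(g : gT)
     sharp (act R (h^-1 * g^-1)%g (antip R (coact R (a h) g))) (h^-1 * g^-1)%g.

Variable TA : tensor Abos Abos.

(* A^e = A (x) A^op : (a (x) b)(c (x) d) = ac (x) db *)
Definition mulAe (x y : TA) : TA :=
  tlift TA (fun a b => tlift TA (fun c d => tens TA (mulA a c) (mulA d b)) y) x.

Definition oneAe : TA := tens TA oneA oneA.

Definition rho (a : Abos) : TA :=
  tlift TA (fun x y => tens TA x (antipA y)) (comulA TA a).

Definition Dgen (x : TA) : Prop :=
  exists (r s : carR R) (g : gT), x = tens TA (sharp r g) (sharp s g^-1).

Definition subalgAe (P : TA -> Prop) : Prop :=
  [/\ P oneAe,
      (forall x y, P x -> P y -> P (x + y)),
      (forall (k : K) x, P x -> P (k *: x)),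
      (forall x y, P x -> P y -> P (mulAe x y)) & P 0].

Definition Dsub (x : TA) : Prop :=
  forall P : TA -> Prop, subalgAe P -> (forall y, Dgen y -> P y) -> P x.

(* left A-submodule of L(A^e) (action a.x = rho(a) x) *)
Definition left_submod_L (P : TA -> Prop) : Prop :=
  [/\ P 0, (forall x y, P x -> P y -> P (x + y)),
      (forall (k : K) x, P x -> P (k *: x)) &
      (forall (a : Abos) x, P x -> P (mulAe (rho a) x))].

(* right A-submodule of R(A^e) (action x.a = x rho(a)) *)
Definition right_submod_R (P : TA -> Prop) : Prop :=
  [/\ P 0, (forall x y, P x -> P y -> P (x + y)),
      (forall (k : K) x, P x -> P (k *: x)) &
      (forall (a : Abos) x, P x -> P (mulAe x (rho a)))].

End Bosonization.

Arguments Dsub {K gT R} TA _.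
Arguments mulAe {K gT R} TA _ _.
Arguments rho {K gT R} TA _.
Arguments comulA {K gT R} TA _.
Arguments left_submod_L {K gT R} TA _.
Arguments right_submod_R {K gT R} TA _.

(* Unfolding the definitions, rho (r # h) = sum_g (r^1 # g h) (x) S_A((r^2)_g # h),
   and since (r^2)_g is homogeneous of degree g the antipode of the bosonization
   collapses to S_A((r^2)_g # h) = s # (g h)^-1 for some s in R.  Hence rho(a) is a
   sum of generators (r # k) (x) (s # k^-1) of D, and as D is a subalgebra of A^e the
   products rho(a) x and x rho(a) stay in D for x in D.

   The tensor products are only given by their universal property, so the statement
   "a linear image of T lies in the subspace P when the images of pure tensors do"
   is obtained by factoring through the quotient W / P, where uniqueness of the
   linear lift applies. *)
From HB Require Import structures.
From Pilot Require Import Defs.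
From mathcomp Require Import all_boot all_order all_algebra all_fingroup.
From Stdlib Require Import ClassicalEpsilon.
Set Implicit Arguments. Unset Strict Implicit. Unset Printing Implicit Defensive.
Import GRing.Theory.
Local Open Scope ring_scope.
Local Open Scope quotient_scope.

Section LinearMaps.
Variables (K : fieldType) (U V W : lmodType K).

Lemma linP_add (f : U -> W) : linP f -> forall x y, f (x + y) = f x + f y.
Proof. by move=> fL x y; have := fL 1 x y; rewrite !scale1r. Qed.

Lemma linP0 (f : U -> W) : linP f -> f 0 = 0.
Proof.
move=> fL; have := fL 1 0 0; rewrite !scale1r addr0 => e.
by apply: (@addrI _ (f 0)); rewrite addr0 -e.
Qed.

Lemma linP_sum (f : U -> W) : linP f ->
  forall (I : Type) (r : seq I) (P : pred I) (F : I -> U),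
  f (\sum_(i <- r | P i) F i) = \sum_(i <- r | P i) f (F i).
Proof. by move=> fL I r P F; apply: (big_morph f (linP_add fL) (linP0 fL)). Qed.

Lemma linP_comp (f : V -> W) (g : U -> V) : linP f -> linP g -> linP (f \o g).
Proof. by move=> fL gL k x y; rewrite /= gL fL. Qed.

End LinearMaps.

Section QuotientBySubspace.
Variables (K : fieldType) (W : lmodType K) (P : W -> Prop).
Hypotheses (P0 : P 0) (PD : forall x y, P x -> P y -> P (x + y))
  (PZ : forall (k : K) x, P x -> P (k *: x)).

Let PN x : P x -> P (- x).
Proof. by move=> Px; rewrite -scaleN1r; apply: PZ. Qed.

Definition congr_mod x y : bool :=
  if excluded_middle_informative (P (x - y)) then true else false.

Lemma congr_modP x y : reflect (P (x - y)) (congr_mod x y).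
Proof. by rewrite /congr_mod; case: excluded_middle_informative; constructor. Qed.

Lemma congr_mod_refl : reflexive congr_mod.
Proof. by move=> x; apply/congr_modP; rewrite subrr. Qed.

Lemma congr_mod_sym : symmetric congr_mod.
Proof. by move=> x y; apply/congr_modP/congr_modP => Pxy; rewrite -opprB; apply: PN. Qed.

Lemma congr_mod_trans : transitive congr_mod.
Proof.
move=> y x z /congr_modP Pxy /congr_modP Pyz; apply/congr_modP.
by rewrite -(subrKA y); apply: PD.
Qed.

Definition congr_mod_equiv :=
  EquivRel congr_mod congr_mod_refl congr_mod_sym congr_mod_trans.
Definition quot := {eq_quot congr_mod_equiv}.
HB.instance Definition _ := Choice.on quot.
Definition proj : W -> quot := \pi_quot.
Local Notation repr := (@generic_quotient.repr _ quot).

Lemma proj_eq x y : proj x = proj y <-> P (x - y).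
Proof. by split=> [/eqmodP/congr_modP | Pxy]; last apply/eqmodP/congr_modP. Qed.

Lemma proj_repr x : P (repr (proj x) - x).
Proof. by apply/proj_eq; rewrite /proj reprK. Qed.

Lemma proj_ind (F : quot -> Prop) : (forall x, F (proj x)) -> forall q, F q.
Proof. by move=> Fproj q; rewrite -(reprK q); apply: Fproj. Qed.

Definition quot_add (a b : quot) : quot := proj (repr a + repr b).
Definition quot_opp (a : quot) : quot := proj (- repr a).
Definition quot_scale (k : K) (a : quot) : quot := proj (k *: repr a).

Lemma quot_addE x y : quot_add (proj x) (proj y) = proj (x + y).
Proof.
apply/proj_eq; rewrite opprD addrACA.
by apply: PD; apply: proj_repr.
Qed.

Lemma quot_oppE x : quot_opp (proj x) = proj (- x).
Proof. by apply/proj_eq; rewrite -opprD; apply/PN/proj_repr. Qed.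

Lemma quot_scaleE k x : quot_scale k (proj x) = proj (k *: x).
Proof. by apply/proj_eq; rewrite -scalerBr; apply/PZ/proj_repr. Qed.

Lemma quot_addA : associative quot_add.
Proof. by elim/proj_ind=> x; elim/proj_ind=> y; elim/proj_ind=> z; rewrite !quot_addE addrA. Qed.

Lemma quot_addC : commutative quot_add.
Proof. by elim/proj_ind=> x; elim/proj_ind=> y; rewrite !quot_addE addrC. Qed.

Lemma quot_add0 : left_id (proj 0) quot_add.
Proof. by elim/proj_ind=> x; rewrite quot_addE add0r. Qed.

Lemma quot_addN : left_inverse (proj 0) quot_opp quot_add.
Proof. by elim/proj_ind=> x; rewrite quot_oppE quot_addE addNr. Qed.

HB.instance Definition _ :=
  GRing.isZmodule.Build quot quot_addA quot_addC quot_add0 quot_addN.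

Lemma quot_scaleA a b q : quot_scale a (quot_scale b q) = quot_scale (a * b) q.
Proof. by elim/proj_ind: q => x; rewrite !quot_scaleE scalerA. Qed.

Lemma quot_scale1 : left_id 1 quot_scale.
Proof. by elim/proj_ind=> x; rewrite quot_scaleE scale1r. Qed.

Lemma quot_scaleDr : right_distributive quot_scale +%R.
Proof.
move=> a; elim/proj_ind=> x; elim/proj_ind=> y.
change (quot_scale a (quot_add (proj x) (proj y))
  = quot_add (quot_scale a (proj x)) (quot_scale a (proj y))).
by rewrite quot_addE !quot_scaleE quot_addE scalerDr.
Qed.

Lemma quot_scaleDl q : {morph quot_scale^~ q : a b / a + b}.
Proof.
elim/proj_ind: q => x a b.
change (quot_scale (a + b) (proj x) = quot_add (quot_scale a (proj x)) (quot_scale b (proj x))).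
by rewrite !quot_scaleE quot_addE scalerDl.
Qed.

HB.instance Definition _ :=
  GRing.Zmodule_isLmodule.Build K quot quot_scaleA quot_scale1 quot_scaleDr quot_scaleDl.

Lemma proj_lin : linP proj.
Proof.
move=> k x y; change (proj (k *: x + y) = quot_add (quot_scale k (proj x)) (proj y)).
by rewrite quot_scaleE quot_addE.
Qed.

Lemma proj_eq0 x : proj x = 0 <-> P x.
Proof. by rewrite (proj_eq x 0) subr0. Qed.

Lemma tensor_ind (U V : lmodType K) (T : tensor U V) (h : T -> W) :
  linP h -> (forall u v, P (h (tens T u v))) -> forall t, P (h t).
Proof.
move=> hL Ph t; apply/proj_eq0.
have zeroL : linP (fun _ : T => 0 : quot) by move=> *; rewrite scaler0 addr0.
rewrite -[proj _]/((proj \o h) t).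
rewrite (tlift_uniq (f := fun _ _ => 0 : quot) (linP_comp proj_lin hL)) => [|u v].
  by rewrite -(tlift_uniq zeroL).
exact/proj_eq0.
Qed.

End QuotientBySubspace.

Section Bosonization.
Variables (K : fieldType) (gT : finGroupType) (R : YDHopf K gT)
  (TA : tensor (Abos R) (Abos R)).

Lemma sharp_lin (g : gT) : linP (fun r : carR R => sharp r g).
Proof.
move=> k x y; apply/ffunP => h; rewrite !ffunE.
by case: eqP; rewrite ?scaler0 ?addr0.
Qed.

Lemma coact_at_lin (g : gT) : linP (fun r : carR R => coact R r g).
Proof. by move=> k x y; rewrite coact_lin !ffunE. Qed.

Lemma sharp0 (g : gT) : sharp (0 : carR R) g = 0.
Proof. exact: linP0 (sharp_lin g). Qed.

Lemma antipA_lin : linP (@antipA K gT R).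
Proof.
move=> k x y; rewrite /antipA scaler_sumr -big_split; apply: eq_bigr => h _.
rewrite scaler_sumr -big_split; apply: eq_bigr => g _.
by rewrite !ffunE coact_at_lin antip_lin Defs.act_lin sharp_lin.
Qed.

(* Only the summand (g, h) survives, by [coact_coassoc]. *)
Lemma antipA_sharp_coact (v : carR R) (g h : gT) :
  antipA (sharp (coact R v g) h) =
  sharp (Defs.act R (g * h)^-1 (antip R (coact R v g))) (g * h)^-1.
Proof.
have act_antip0 k : Defs.act R k (antip R 0) = 0.
  by rewrite (linP0 (@antip_lin _ _ R)) (linP0 (@Defs.act_lin _ _ R _)).
rewrite /antipA (bigD1 h) //= [X in _ + X]big1 ?addr0 => [|h' h'h]; last first.
  by rewrite big1 // => g' _; rewrite ffunE (negbTE h'h) (linP0 (coact_at_lin _))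
    act_antip0 sharp0.
rewrite (bigD1 g) //= [X in _ + X]big1 ?addr0 => [|g' g'g]; last first.
  by rewrite ffunE eqxx coact_coassoc eq_sym (negbTE g'g) act_antip0 sharp0.
by rewrite ffunE eqxx coact_coassoc eqxx -invMg.
Qed.

Let rho_term (x y : Abos R) : TA := tens TA x (antipA y).

Let comulA_term (g h : gT) (x y : carR R) : TA :=
  tens TA (sharp x (g * h)%g) (sharp (coact R y g) h).

Lemma rho_term_bilin : bilin rho_term.
Proof.
split=> v; first exact: (tens_bilin TA).1.
exact: linP_comp ((tens_bilin TA).2 v) antipA_lin.
Qed.

Lemma comulA_term_bilin (g h : gT) : bilin (comulA_term g h).
Proof.
split=> v; first exact: linP_comp ((tens_bilin TA).1 _) (sharp_lin _).
exact: linP_comp ((tens_bilin TA).2 _) (linP_comp (sharp_lin _) (coact_at_lin _)).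
Qed.

Lemma Dsub0 : Dsub TA 0.
Proof. by move=> P []. Qed.

Lemma DsubD x y : Dsub TA x -> Dsub TA y -> Dsub TA (x + y).
Proof. by move=> Dx Dy P PA Pgen; case: (PA) => _ PD _ _ _; apply: PD; [exact: Dx | exact: Dy]. Qed.

Lemma DsubZ (k : K) x : Dsub TA x -> Dsub TA (k *: x).
Proof. by move=> Dx P PA Pgen; case: (PA) => _ _ PZ _ _; apply: PZ; exact: Dx. Qed.

Lemma DsubM x y : Dsub TA x -> Dsub TA y -> Dsub TA (mulAe TA x y).
Proof. by move=> Dx Dy P PA Pgen; case: (PA) => _ _ _ PM _; apply: PM; [exact: Dx | exact: Dy]. Qed.

Lemma Dsub_gen x : Dgen x -> Dsub TA x.
Proof. by move=> Gx P _; apply. Qed.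

Lemma Dsub_rho (a : Abos R) : Dsub TA (rho TA a).
Proof.
have tliftL := @tlift_lin _ _ _ TA _ _ rho_term_bilin.
rewrite /rho (linP_sum tliftL); apply: big_ind => [||h _]; [exact: Dsub0 | exact: DsubD |].
rewrite (linP_sum tliftL); apply: big_ind => [||g _]; [exact: Dsub0 | exact: DsubD |].
apply: (tensor_ind Dsub0 DsubD DsubZ
  (h := tlift TA rho_term \o tlift (T2 R) (comulA_term g h))).
  exact: linP_comp tliftL (@tlift_lin _ _ _ (T2 R) _ _ (comulA_term_bilin g h)).
move=> u v; rewrite /= (tlift_tens _ (comulA_term_bilin g h)).
rewrite (tlift_tens _ rho_term_bilin) /rho_term antipA_sharp_coact.
by apply: Dsub_gen; do 3 eexists.
Qed.

End Bosonization.

Theorem mainTheorem10 (K : fieldType) (gT : finGroupType) (R : YDHopf K gT)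
    (TA : tensor (Abos R) (Abos R)) :
  left_submod_L TA (Dsub TA) /\ right_submod_R TA (Dsub TA).
Proof.
split; split; do ?[exact: Dsub0 | exact: DsubD | exact: DsubZ];
  by move=> a x Dx; apply: DsubM => //; apply: Dsub_rho.
Qed.
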